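(* Let $\mathcal{L}$ be a nonempty set and $\mathcal{C}: 2^{\mathcal{L}}\to 2^{\mathcal{L}}$ a C-logics. A set $A\subseteq\mathcal{L}$ is inconsistent iff $\mathrm{Cn}(A)=\mathcal{L}$.
   Context: A C-logics is a map $\mathcal{C}: 2^{\mathcal{L}}\to 2^{\mathcal{L}}$ satisfying Inclusion ($A\subseteq\mathcal{C}(A)$) and Cumulativity ($A\subseteq B\subseteq\mathcal{C}(A)\Rightarrow\mathcal{C}(A)=\mathcal{C}(B)$) for all $A,B\subseteq\mathcal{L}$. $A$ is inconsistent iff $\mathcal{C}(A)=\mathcal{L}$. A theory is a set $T\subseteq\mathcal{L}$ with $\mathcal{C}(T)=T$. $\mathrm{Cn}(A)=\bigcap\{T : T\supseteq A,\ T \text{ a theory}\}$. *)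

From mathcomp Require Import all_boot.
From mathcomp Require Import classical_sets.
Set Implicit Arguments. Unset Strict Implicit. Unset Printing Implicit Defensive.
Local Open Scope classical_set_scope.

Definition C_logic (L : Type) (C : set L -> set L) : Prop :=
  (forall A : set L, A `<=` C A) /\
  (forall A B : set L, A `<=` B -> B `<=` C A -> C A = C B).

Definition inconsistent (L : Type) (C : set L -> set L) (A : set L) : Prop :=
  C A = setT.

Definition is_theory (L : Type) (C : set L -> set L) (T : set L) : Prop :=
  C T = T.

Definition Cn (L : Type) (C : set L -> set L) (A : set L) : set L :=
  \bigcap_(T in [set T : set L | A `<=` T /\ is_theory C T]) T.

(* A C-logic need not be monotone, so Cn(A) may be strictly smaller than C(A); still C(A) is
   a theory containing A, whence Cn(A) is contained in C(A).  Conversely, if C(A) = L then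
   any theory T containing A satisfies A <= T <= C(A), so cumulativity gives C(T) = C(A) = L,
   i.e. T = L. *)
From mathcomp Require Import all_boot.
From mathcomp Require Import classical_sets.
Set Implicit Arguments.
Unset Strict Implicit.
Unset Printing Implicit Defensive.

Local Open Scope classical_set_scope.

Section CLogic.

Variables (L : Type) (C : set L -> set L).
Hypothesis HC : C_logic C.

Lemma C_logic_theory (A : set L) : is_theory C (C A).
Proof.
have [incl cumul] := HC.
by rewrite /is_theory -(cumul A) ?incl.
Qed.

Lemma Cn_sub_C (A : set L) : Cn C A `<=` C A.
Proof.
by move=> x; apply; split; [exact: HC.1 | exact: C_logic_theory].
Qed.

Lemma theory_of_inconsistent (A T : set L) :
  inconsistent C A -> A `<=` T -> is_theory C T -> T = setT.
Proof.
move=> incA AT thT; have [_ cumul] := HC.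
by rewrite -thT -(cumul A) // incA.
Qed.

Lemma Cn_inconsistent (A : set L) : inconsistent C A -> Cn C A = setT.
Proof.
move=> incA; apply/seteqP; split=> // x _ T [AT thT].
by rewrite (theory_of_inconsistent incA AT thT).
Qed.

End CLogic.

Theorem lemma9 (L : Type) (HL : inhabited L) (C : set L -> set L)
  (HC : C_logic C) (A : set L) :
  inconsistent C A <-> Cn C A = setT.
Proof.
split; first exact: Cn_inconsistent.
move=> CnA; apply/seteqP; split=> // x _.
by apply: Cn_sub_C; rewrite ?CnA.
Qed.
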